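(* For all commands $c, c'$ of the coalesced projection machine, viewed also as commands of the (non-coalesced) projection machine by expanding $\mathsf{pick}_n$ and $\mathsf{drop}_n$ as macros: (1) $c \to c'$ in the coalesced machine if and only if $c \to c'$ in the non-coalesced machine; and (2) $c \hookrightarrow c'$ in the coalesced machine if and only if $c \hookrightarrow c'$ in the non-coalesced machine.
   Context: Pure $\lambda$-terms $v ::= x \mid v\,v \mid \lambda x.v$, with capture-avoiding substitution $v[v'/x]$. Non-coalesced projection machine. Commands $c ::= \langle v \,\|\, E\rangle$; terms $v ::= x \mid v\,v \mid \lambda x.v \mid \mathsf{car}(S)$; co-terms $E ::= v\cdot E \mid S$; stuck co-terms $S ::= \mathsf{tp} \mid \mathsf{cdr}(S)$. Reduction: $\langle v\,v' \,\|\, E\rangle \to \langle v \,\|\, v'\cdot E\rangle$; $\langle \lambda x.v \,\|\, v'\cdot E\rangle \to \langle v[v'/x] \,\|\, E\rangle$; $\langle \lambda x.v \,\|\, S\rangle \to \langle v[\mathsf{car}(S)/x] \,\|\, \mathsf{cdr}(S)\rangle$. Readback: $\langle v \,\|\, v'\cdot E\rangle \hookrightarrow \langle v\,v' \,\|\, E\rangle$; $\langle v \,\|\, \mathsf{tp}\rangle \hookrightarrow v$; $\langle v \,\|\, \mathsf{cdr}(S)\rangle \hookrightarrow \langle \lambda x.v[x/\mathsf{car}(S)] \,\|\, S\rangle$ with $x$ fresh, where $v[x/u]$ replaces every occurrence of the subterm $u$ in $v$ by $x$. Macros: $\mathsf{drop}_0(E) = E$, $\mathsf{drop}_{n+1}(E)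 = \mathsf{cdr}(\mathsf{drop}_n(E))$, $\mathsf{pick}_n(E) = \mathsf{car}(\mathsf{drop}_n(E))$. Coalesced projection machine. Commands $c ::= \langle v \,\|\, E\rangle$; terms $v ::= x \mid v\,v \mid \lambda x.v \mid \mathsf{pick}_n(\mathsf{tp})$; co-terms $E ::= v\cdot E \mid \mathsf{drop}_n(\mathsf{tp})$ ($n$ a natural number). Reduction: $\langle v\,v' \,\|\, E\rangle \to \langle v \,\|\, v'\cdot E\rangle$; $\langle \lambda x.v \,\|\, v'\cdot E\rangle \to \langle v[v'/x] \,\|\, E\rangle$; $\langle \lambda x.v \,\|\, \mathsf{drop}_n(\mathsf{tp})\rangle \to \langle v[\mathsf{pick}_n(\mathsf{tp})/x] \,\|\, \mathsf{drop}_{n+1}(\mathsf{tp})\rangle$. Readback: $\langle v \,\|\, v'\cdot E\rangle \hookrightarrow \langle v\,v' \,\|\, E\rangle$; $\langle v \,\|\, \mathsf{tp}\rangle \hookrightarrow v$; $\langle v \,\|\, \mathsf{drop}_{n+1}(\mathsf{tp})\rangle \hookrightarrow \langle \lambda x.v[x/\mathsf{pick}_n(\mathsf{tp})] \,\|\, \mathsf{drop}_n(\mathsf{tp})\rangle$ where $x$ is not free in $v$ and $v[x/\mathsf{pick}_n(\mathsf{tp})]$ replaces all occurrences of $\mathsf{pick}_n(\mathsf{tp})$ in $v$ by $x$. *)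

(* Pure lambda terms with de Bruijn indices (terms are thus
   identified up to alpha-equivalence). *)
From Stdlib Require Import Arith.

Inductive stk : Type :=
| Tp : stk
| Cdr : stk -> stk.

Inductive tm : Type :=
| Var : nat -> tm
| App : tm -> tm -> tm
| Lam : tm -> tm
| Car : stk -> tm.

Inductive coterm : Type :=
| Push : tm -> coterm -> coterm
| Stuck : stk -> coterm.

Inductive cmd : Type :=
| Cmd : tm -> coterm -> cmd.

Definition stk_eq_dec : forall s t : stk, {s = t} + {s <> t}.
Proof. decide equality. Defined.

Fixpoint lift (k : nat) (t : tm) : tm :=
  match t with
  | Var n => if Nat.ltb n k then Var n else Var (S n)
  | App a b => App (lift k a) (lift k b)
  | Lam a => Lam (lift (S k) a)
  | Car s => Car s
  end.

(* subst k u t : capture-avoiding substitution of u for the variable k in t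
   (the variable being removed: indices above k are decremented).
   t[u/x] for the outermost binder is subst 0 u t. *)
Fixpoint subst (k : nat) (u : tm) (t : tm) : tm :=
  match t with
  | Var n =>
      match Nat.compare n k with
      | Lt => Var n
      | Eq => u
      | Gt => Var (pred n)
      end
  | App a b => App (subst k u a) (subst k u b)
  | Lam a => Lam (subst (S k) (lift 0 u) a)
  | Car s => Car s
  end.

(* abstract k s t : replace every occurrence of the subterm car(s) in t by the
   (fresh) variable k, shifting the free variables >= k of t up by one.
   \x. v[x/car(S)] (x fresh) is Lam (abstract 0 S v). *)
Fixpoint abstract (k : nat) (s : stk) (t : tm) : tm :=
  match t with
  | Var n => if Nat.ltb n k then Var n else Var (S n)
  | App a b => App (abstract k s a) (abstract k s b)
  | Lam a => Lam (abstract (S k) s a)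
  | Car s' => if stk_eq_dec s s' then Var k else Car s'
  end.

Inductive step : cmd -> cmd -> Prop :=
| step_app : forall v v' E,
    step (Cmd (App v v') E) (Cmd v (Push v' E))
| step_beta : forall v v' E,
    step (Cmd (Lam v) (Push v' E)) (Cmd (subst 0 v' v) E)
| step_proj : forall v s,
    step (Cmd (Lam v) (Stuck s)) (Cmd (subst 0 (Car s) v) (Stuck (Cdr s))).

Inductive rb : Type :=
| RCmd : cmd -> rb
| RTm : tm -> rb.

Inductive readback : cmd -> rb -> Prop :=
| rb_push : forall v v' E,
    readback (Cmd v (Push v' E)) (RCmd (Cmd (App v v') E))
| rb_tp : forall v,
    readback (Cmd v (Stuck Tp)) (RTm v)
| rb_cdr : forall v s,
    readback (Cmd v (Stuck (Cdr s))) (RCmd (Cmd (Lam (abstract 0 s v)) (Stuck s))).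

Fixpoint drop (n : nat) (E : stk) : stk :=
  match n with
  | O => E
  | S m => Cdr (drop m E)
  end.

Definition pick (n : nat) (E : stk) : tm := Car (drop n E).

Inductive ctm : Type :=
| CVar : nat -> ctm
| CApp : ctm -> ctm -> ctm
| CLam : ctm -> ctm
| CPick : nat -> ctm.        (* CPick n = pick_n(tp) *)

Inductive ccoterm : Type :=
| CPush : ctm -> ccoterm -> ccoterm
| CDrop : nat -> ccoterm.    (* CDrop n = drop_n(tp) *)

Inductive ccmd : Type :=
| CCmd : ctm -> ccoterm -> ccmd.

Fixpoint clift (k : nat) (t : ctm) : ctm :=
  match t with
  | CVar n => if Nat.ltb n k then CVar n else CVar (S n)
  | CApp a b => CApp (clift k a) (clift k b)
  | CLam a => CLam (clift (S k) a)
  | CPick m => CPick m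
  end.

Fixpoint csubst (k : nat) (u : ctm) (t : ctm) : ctm :=
  match t with
  | CVar n =>
      match Nat.compare n k with
      | Lt => CVar n
      | Eq => u
      | Gt => CVar (pred n)
      end
  | CApp a b => CApp (csubst k u a) (csubst k u b)
  | CLam a => CLam (csubst (S k) (clift 0 u) a)
  | CPick m => CPick m
  end.

Fixpoint cabstract (k : nat) (n : nat) (t : ctm) : ctm :=
  match t with
  | CVar m => if Nat.ltb m k then CVar m else CVar (S m)
  | CApp a b => CApp (cabstract k n a) (cabstract k n b)
  | CLam a => CLam (cabstract (S k) n a)
  | CPick m => if Nat.eqb n m then CVar k else CPick m
  end.

Inductive cstep : ccmd -> ccmd -> Prop :=
| cstep_app : forall v v' E,
    cstep (CCmd (CApp v v') E) (CCmd v (CPush v' E))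
| cstep_beta : forall v v' E,
    cstep (CCmd (CLam v) (CPush v' E)) (CCmd (csubst 0 v' v) E)
| cstep_proj : forall v n,
    cstep (CCmd (CLam v) (CDrop n)) (CCmd (csubst 0 (CPick n) v) (CDrop (S n))).

Inductive crb : Type :=
| CRCmd : ccmd -> crb
| CRTm : ctm -> crb.

Inductive creadback : ccmd -> crb -> Prop :=
| crb_push : forall v v' E,
    creadback (CCmd v (CPush v' E)) (CRCmd (CCmd (CApp v v') E))
| crb_tp : forall v,
    creadback (CCmd v (CDrop 0)) (CRTm v)
| crb_drop : forall v n,
    creadback (CCmd v (CDrop (S n))) (CRCmd (CCmd (CLam (cabstract 0 n v)) (CDrop n))).

Fixpoint emb_tm (t : ctm) : tm :=
  match t with
  | CVar n => Var n
  | CApp a b => App (emb_tm a) (emb_tm b)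
  | CLam a => Lam (emb_tm a)
  | CPick n => pick n Tp
  end.

Fixpoint emb_coterm (E : ccoterm) : coterm :=
  match E with
  | CPush v E' => Push (emb_tm v) (emb_coterm E')
  | CDrop n => Stuck (drop n Tp)
  end.

Definition emb_cmd (c : ccmd) : cmd :=
  match c with CCmd v E => Cmd (emb_tm v) (emb_coterm E) end.

Definition emb_rb (r : crb) : rb :=
  match r with
  | CRCmd c => RCmd (emb_cmd c)
  | CRTm v => RTm (emb_tm v)
  end.

(* Macro expansion is injective and commutes with lifting, substitution and
   abstraction (the latter because drop_n(tp) determines n, so abstracting
   car(drop_n(tp)) abstracts exactly the occurrences of pick_n(tp)).  Hence each
   coalesced rule maps to an instance of the same projection-machine rule, and
   every transition out of an expanded command is the image of a coalesced one. *)
From Stdlib Require Import Arith.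

Lemma drop_Tp_inj n m : drop n Tp = drop m Tp -> n = m.
Proof.
  revert m; induction n as [|n IHn]; intros [|m]; simpl; intro H;
    try discriminate; auto.
  injection H as H; f_equal; auto.
Qed.

Lemma emb_tm_inj a b : emb_tm a = emb_tm b -> a = b.
Proof.
  revert b; induction a; intros []; simpl; intro H; try discriminate;
    injection H; intros; f_equal; auto using drop_Tp_inj.
Qed.

Lemma emb_coterm_inj E F : emb_coterm E = emb_coterm F -> E = F.
Proof.
  revert F; induction E; intros []; simpl; intro H; try discriminate;
    injection H; intros; f_equal; auto using emb_tm_inj, drop_Tp_inj.
Qed.

Lemma emb_cmd_inj c d : emb_cmd c = emb_cmd d -> c = d.
Proof.
  destruct c, d; simpl; intro H; injection H; intros; f_equal;
    auto using emb_tm_inj, emb_coterm_inj.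
Qed.

Lemma emb_rb_inj r r' : emb_rb r = emb_rb r' -> r = r'.
Proof.
  destruct r, r'; simpl; intro H; try discriminate; injection H; intros;
    f_equal; auto using emb_tm_inj, emb_cmd_inj.
Qed.

Lemma emb_lift t k : emb_tm (clift k t) = lift k (emb_tm t).
Proof.
  revert k; induction t; intro k; simpl; f_equal; auto.
  destruct (Nat.ltb n k); reflexivity.
Qed.

Lemma emb_subst t k u : emb_tm (csubst k u t) = subst k (emb_tm u) (emb_tm t).
Proof.
  revert k u; induction t; intros k u; simpl.
  - destruct (Nat.compare n k); reflexivity.
  - rewrite IHt1, IHt2; reflexivity.
  - rewrite IHt, emb_lift; reflexivity.
  - reflexivity.
Qed.

Lemma emb_abstract t k n :
  emb_tm (cabstract k n t) = abstract k (drop n Tp) (emb_tm t).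
Proof.
  revert k; induction t as [m| | |m]; intro k; simpl; try (f_equal; auto).
  - destruct (Nat.ltb m k); reflexivity.
  - destruct (stk_eq_dec (drop n Tp) (drop m Tp)) as [e|e].
    + apply drop_Tp_inj in e; subst; rewrite Nat.eqb_refl; reflexivity.
    + destruct (Nat.eqb_spec n m); [subst; contradiction | reflexivity].
Qed.

Lemma emb_cstep c c' : cstep c c' -> step (emb_cmd c) (emb_cmd c').
Proof.
  intro H; destruct H; simpl; rewrite ?emb_subst; constructor.
Qed.

Lemma step_emb_cmd c d :
  step (emb_cmd c) d -> exists c', cstep c c' /\ emb_cmd c' = d.
Proof.
  destruct c as [[] []]; simpl; intro H; inversion H; subst;
    eexists; (split; [constructor | simpl; rewrite ?emb_subst; reflexivity]).
Qed.

Lemma emb_creadback c r : creadback c r -> readback (emb_cmd c) (emb_rb r).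
Proof.
  intro H; destruct H; simpl; rewrite ?emb_abstract; constructor.
Qed.

Lemma readback_emb_cmd c r :
  readback (emb_cmd c) r -> exists r', creadback c r' /\ emb_rb r' = r.
Proof.
  destruct c as [v [|[|n]]]; simpl; intro H; inversion H; subst;
    eexists; (split; [constructor | simpl; rewrite ?emb_abstract; reflexivity]).
Qed.

Theorem theorem6 :
  (forall c c' : ccmd, cstep c c' <-> step (emb_cmd c) (emb_cmd c')) /\
  (forall (c : ccmd) (c' : crb), creadback c c' <-> readback (emb_cmd c) (emb_rb c')).
Proof.
  split; intros c c'; split.
  - apply emb_cstep.
  - intro H; destruct (step_emb_cmd _ _ H) as [c'' [Hstep Hemb]].
    apply emb_cmd_inj in Hemb; subst; exact Hstep.
  - apply emb_creadback.
  - intro H; destruct (readback_emb_cmd _ _ H) as [r [Hrb Hemb]].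
    apply emb_rb_inj in Hemb; subst; exact Hrb.
Qed.
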